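(* Let $T_\mathrm{i}>T_\mathrm{o}^{\mathrm{OA}}>0$, $U_\mathrm{i}>0$, $U_\mathrm{o}>0$, $\Omega_\mathrm{c}\ge 0$, $\Omega_\mathrm{h}\ge 0$ and $\varepsilon\in[0,1]$. For $\eta\in[0,1]$ set $\overline{T}_\mathrm{h}(\eta)=\frac{\eta T_\mathrm{i}}{U_\mathrm{i}}$ and $\overline{T}_\mathrm{c}(\eta)=\frac{(1-\eta)T_\mathrm{o}^{\mathrm{OA}}}{U_\mathrm{o}}$, and consider the problem $$\max_{0\le\eta\le1}\ \eta T_\mathrm{i}+(1-\eta)T_\mathrm{o}^{\mathrm{OA}}\quad\text{subject to}\quad \overline{T}_\mathrm{c}(\eta)\ge\Omega_\mathrm{c},\ \ \overline{T}_\mathrm{h}(\eta)\ge\Omega_\mathrm{h},\ \ \overline{T}_\mathrm{c}(\eta)\ge\varepsilon\,\overline{T}_\mathrm{h}(\eta).$$ Let $$\eta^\ast=\min\left(1-\frac{\Omega_\mathrm{c}U_\mathrm{o}}{T_\mathrm{o}^{\mathrm{OA}}},\ \left(1+\varepsilon\frac{U_\mathrm{o}T_\mathrm{i}}{U_\mathrm{i}T_\mathrm{o}^{\mathrm{OA}}}\right)^{-1}\right).$$ If $\eta^\ast\ge\frac{\Omega_\mathrm{h}U_\mathrm{i}}{T_\mathrm{i}}$, then $\eta^\ast$ is feasible and is an optimal solution of the problem.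
   Context: Interpretation: in shared access a femtocell access point allocates a fraction $\eta$ of its time slots to its $U_\mathrm{i}$ home users (zone throughput $T_\mathrm{i}$) and $1-\eta$ to $U_\mathrm{o}$ neighboring cellular users (zone throughput $T_\mathrm{o}^{\mathrm{OA}}$); $\Omega_\mathrm{c},\Omega_\mathrm{h}$ are minimum per-user throughputs and $\varepsilon$ a fairness parameter. *)

From Stdlib Require Import Reals.
Open Scope R_scope.

Definition Th_bar (Ti Ui eta : R) : R := eta * Ti / Ui.
Definition Tc_bar (To Uo eta : R) : R := (1 - eta) * To / Uo.

Definition objective (Ti To eta : R) : R := eta * Ti + (1 - eta) * To.

Definition feasible (Ti To Ui Uo Oc Oh eps eta : R) : Prop :=
  0 <= eta <= 1 /\
  Tc_bar To Uo eta >= Oc /\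
  Th_bar Ti Ui eta >= Oh /\
  Tc_bar To Uo eta >= eps * Th_bar Ti Ui eta.

Definition optimal (Ti To Ui Uo Oc Oh eps eta : R) : Prop :=
  feasible Ti To Ui Uo Oc Oh eps eta /\
  forall eta', feasible Ti To Ui Uo Oc Oh eps eta' ->
    objective Ti To eta' <= objective Ti To eta.

Definition eta_star (Ti To Ui Uo Oc eps : R) : R :=
  Rmin (1 - Oc * Uo / To) (/ (1 + eps * (Uo * Ti) / (Ui * To))).

(* Each of the three constraints is affine in eta, so it cuts out a threshold:
   the home-user guarantee is a lower bound eta >= Oh Ui / Ti, while the
   cellular guarantee and the fairness constraint are upper bounds whose minimum
   is eta_star.  The feasible set is therefore the interval
   [Oh Ui / Ti, eta_star] (intersected with [0, 1]), and the objective is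
   nondecreasing in eta because Ti > To, so its right endpoint is optimal. *)

From Stdlib Require Import Reals Lra.
Open Scope R_scope.

Lemma Rge_iff_scaled_nonneg (x y k d : R) :
  0 < k -> x - y = k * d -> (x >= y <-> 0 <= d).
Proof. intros Hk E; split; intro H; nra. Qed.

Lemma Tc_bar_ge_iff (To Uo Oc eta : R) : 0 < To -> 0 < Uo ->
  (Tc_bar To Uo eta >= Oc <-> eta <= 1 - Oc * Uo / To).
Proof.
  intros HTo HUo.
  rewrite (Rge_iff_scaled_nonneg _ _ (To / Uo) (1 - Oc * Uo / To - eta)).
  - split; lra.
  - apply Rdiv_lt_0_compat; lra.
  - unfold Tc_bar; field; lra.
Qed.

Lemma Th_bar_ge_iff (Ti Ui Oh eta : R) : 0 < Ti -> 0 < Ui ->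
  (Th_bar Ti Ui eta >= Oh <-> Oh * Ui / Ti <= eta).
Proof.
  intros HTi HUi.
  rewrite (Rge_iff_scaled_nonneg _ _ (Ti / Ui) (eta - Oh * Ui / Ti)).
  - split; lra.
  - apply Rdiv_lt_0_compat; lra.
  - unfold Th_bar; field; lra.
Qed.

Lemma fairness_weight_nonneg (Ti To Ui Uo eps : R) :
  0 < Ti -> 0 < To -> 0 < Ui -> 0 < Uo -> 0 <= eps ->
  0 <= eps * (Uo * Ti) / (Ui * To).
Proof.
  intros HTi HTo HUi HUo Heps.
  apply Rmult_le_pos.
  - apply Rmult_le_pos; [| left; apply Rmult_lt_0_compat]; lra.
  - left; apply Rinv_0_lt_compat, Rmult_lt_0_compat; lra.
Qed.

Lemma fairness_iff (Ti To Ui Uo eps eta : R) :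
  0 < Ti -> 0 < To -> 0 < Ui -> 0 < Uo -> 0 <= eps ->
  (Tc_bar To Uo eta >= eps * Th_bar Ti Ui eta <->
   eta <= / (1 + eps * (Uo * Ti) / (Ui * To))).
Proof.
  intros HTi HTo HUi HUo Heps.
  set (k := eps * (Uo * Ti) / (Ui * To)).
  assert (Hk : 0 <= k) by (apply fairness_weight_nonneg; assumption).
  rewrite (Rge_iff_scaled_nonneg _ _ (To / Uo * (1 + k)) (/ (1 + k) - eta)).
  - split; lra.
  - apply Rmult_lt_0_compat; [apply Rdiv_lt_0_compat |]; lra.
  - transitivity (To / Uo * (1 - (1 + k) * eta)).
    + unfold Tc_bar, Th_bar, k; field; lra.
    + field; lra.
Qed.

Lemma feasible_iff (Ti To Ui Uo Oc Oh eps eta : R) :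
  0 < Ti -> 0 < To -> 0 < Ui -> 0 < Uo -> 0 <= eps ->
  (feasible Ti To Ui Uo Oc Oh eps eta <->
   0 <= eta <= 1 /\ Oh * Ui / Ti <= eta <= eta_star Ti To Ui Uo Oc eps).
Proof.
  intros HTi HTo HUi HUo Heps; unfold feasible, eta_star.
  rewrite Tc_bar_ge_iff, Th_bar_ge_iff, fairness_iff by assumption.
  pose proof (Rmin_l (1 - Oc * Uo / To) (/ (1 + eps * (Uo * Ti) / (Ui * To)))).
  pose proof (Rmin_r (1 - Oc * Uo / To) (/ (1 + eps * (Uo * Ti) / (Ui * To)))).
  pose proof (Rmin_glb (1 - Oc * Uo / To) (/ (1 + eps * (Uo * Ti) / (Ui * To))) eta).
  intuition lra.
Qed.

Lemma objective_le (Ti To eta eta' : R) :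
  To <= Ti -> eta' <= eta -> objective Ti To eta' <= objective Ti To eta.
Proof. intros; unfold objective; nra. Qed.

Lemma eta_star_le_1 (Ti To Ui Uo Oc eps : R) :
  0 < Ti -> 0 < To -> 0 < Ui -> 0 < Uo -> 0 <= eps ->
  eta_star Ti To Ui Uo Oc eps <= 1.
Proof.
  intros HTi HTo HUi HUo Heps.
  eapply Rle_trans; [apply Rmin_r |].
  rewrite <- Rinv_1 at 2; apply Rinv_le_contravar; [lra |].
  pose proof (fairness_weight_nonneg Ti To Ui Uo eps HTi HTo HUi HUo Heps).
  lra.
Qed.

Theorem proposition1 (Ti To Ui Uo Oc Oh eps : R) :
  Ti > To -> To > 0 -> Ui > 0 -> Uo > 0 -> Oc >= 0 -> Oh >= 0 ->
  0 <= eps <= 1 ->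
  eta_star Ti To Ui Uo Oc eps >= Oh * Ui / Ti ->
  feasible Ti To Ui Uo Oc Oh eps (eta_star Ti To Ui Uo Oc eps) /\
  optimal Ti To Ui Uo Oc Oh eps (eta_star Ti To Ui Uo Oc eps).
Proof.
  intros HTi HTo HUi HUo _ HOh Heps Hstar.
  assert (HTi0 : 0 < Ti) by lra.
  assert (Hlow : 0 <= Oh * Ui / Ti).
  { apply Rmult_le_pos; [nra | left; apply Rinv_0_lt_compat; lra]. }
  pose proof (eta_star_le_1 Ti To Ui Uo Oc eps HTi0 HTo HUi HUo (proj1 Heps)) as Hstar1.
  assert (Hfeas : feasible Ti To Ui Uo Oc Oh eps (eta_star Ti To Ui Uo Oc eps)).
  { apply feasible_iff; lra. }
  split; [exact Hfeas |]; split; [exact Hfeas |].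
  intros eta' Hfeas'.
  apply feasible_iff in Hfeas'; [| lra ..].
  apply objective_le; lra.
Qed.
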